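(* Let $\Lambda$ be a row-finite $k$-graph with no sources, $S$ a semigroup, $\eta:\Lambda\to S$ a functor and $\Lambda\times_\eta S$ the associated skew product graph. If $\Lambda$ is aperiodic then $\Lambda\times_\eta S$ is aperiodic.
   Context: All semigroups are countable, cancellative, with identity. A $k$-graph is a countable category $\Lambda$ with a functor $d:\Lambda\to\mathbb{N}^k$ with unique factorisation; $\Lambda^n=d^{-1}(n)$, $\Lambda^0$ = vertices, $v\Lambda=\{\lambda:r(\lambda)=v\}$; row-finite: $v\Lambda^n$ finite; no sources: $v\Lambda^n\ne\emptyset$ for $n\ne0$. The skew product $\Lambda\times_\eta S$ has vertices $\Lambda^0\times S$, morphisms $\Lambda\times S$, $r(\lambda,t)=(r(\lambda),t)$, $s(\lambda,t)=(s(\lambda),t\eta(\lambda))$, $(\lambda,t)(\mu,t\eta(\lambda))=(\lambda\mu,t)$, $d(\lambda,t)=d(\lambda)$. $\lambda(m,n)$ is the unique path of degree $n-m$ with $\lambda=\lambda'\lambda(m,n)\lambda''$, $d(\lambda')=m$. A $k$-graph $\Gamma$ is aperiodic if for every $v\in\Gamma^0$ and all $m\neq n\in\mathbb{N}^k$ there is $\lambda\in v\Gamma$ with $d(\lambda)\ge m\vee n$ and $\lambda(m,m+d(\lambda)-(m\vee n))\ne\lambda(n,n+d(\lambda)-(m\vee n))$. *)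

From mathcomp Require Import all_boot.
Set Implicit Arguments. Unset Strict Implicit. Unset Printing Implicit Defensive.

Definition degk (k : nat) := {ffun 'I_k -> nat}.
Definition dzero k : degk k := [ffun => 0].
Definition dadd k (m n : degk k) : degk k := [ffun i => m i + n i].
Definition dsub k (m n : degk k) : degk k := [ffun i => m i - n i].
Definition djoin k (m n : degk k) : degk k := [ffun i => maxn (m i) (n i)].
Definition dle k (m n : degk k) : Prop := forall i, m i <= n i.

(* Raw data of a (countable) category with a degree functor into N^k.
   cod = range map r, dom = source map s, comp l m = l m (meaningful when
   dom l = cod m), idm v = identity morphism at v. *)
Record kgraph_data (k : nat) := KGData {
  Obj : countType;
  Mor : countType;
  cod : Mor -> Obj;
  dom : Mor -> Obj;
  comp : Mor -> Mor -> Mor;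
  idm : Obj -> Mor;
  deg : Mor -> degk k }.

Definition is_kgraph k (L : kgraph_data k) : Prop :=
  (forall v : Obj L, dom (idm v) = v /\ cod (idm v) = v) /\
  (forall l m : Mor L, dom l = cod m -> cod (comp l m) = cod l /\ dom (comp l m) = dom m) /\
  (forall l : Mor L, comp (idm (cod l)) l = l /\ comp l (idm (dom l)) = l) /\
  (forall l m n : Mor L, dom l = cod m -> dom m = cod n ->
      comp (comp l m) n = comp l (comp m n)) /\
  (forall v : Obj L, deg (idm v) = dzero k) /\
  (forall l m : Mor L, dom l = cod m -> deg (comp l m) = dadd (deg l) (deg m)) /\
  (forall (l : Mor L) (m n : degk k), deg l = dadd m n ->
      exists! p : Mor L * Mor L,
        dom p.1 = cod p.2 /\ deg p.1 = m /\ deg p.2 = n /\ comp p.1 p.2 = l).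

Definition row_finite k (L : kgraph_data k) : Prop :=
  forall (v : Obj L) (n : degk k), exists s : seq (Mor L),
    forall l : Mor L, cod l = v -> deg l = n -> l \in s.

Definition no_sources k (L : kgraph_data k) : Prop :=
  forall (v : Obj L) (n : degk k), exists l : Mor L, cod l = v /\ deg l = n.

(* mu = l(a,b): the unique path of degree b - a with l = l' mu l'', d(l') = a *)
Definition is_seg k (L : kgraph_data k) (l : Mor L) (a b : degk k) (mu : Mor L) : Prop :=
  exists l1 l2 : Mor L, dom l1 = cod mu /\ dom mu = cod l2 /\
    deg l1 = a /\ deg mu = dsub b a /\ l = comp (comp l1 mu) l2.

Definition aperiodic k (L : kgraph_data k) : Prop :=
  forall (v : Obj L) (m n : degk k), m <> n ->
    exists l : Mor L, cod l = v /\ dle (djoin m n) (deg l) /\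
      let p := dsub (deg l) (djoin m n) in
      exists mu nu : Mor L, is_seg l m (dadd m p) mu /\ is_seg l n (dadd n p) nu /\ mu <> nu.

Definition is_semigroup (S : countType) (op : S -> S -> S) (e : S) : Prop :=
  (forall a b c, op a (op b c) = op (op a b) c) /\
  (forall a, op e a = a /\ op a e = a) /\
  (forall a b c, op a b = op a c -> b = c) /\
  (forall a b c, op b a = op c a -> b = c).

(* eta : L -> S is a functor (S viewed as a one-object category). *)
Definition is_functor k (L : kgraph_data k) (S : countType) (op : S -> S -> S) (e : S)
  (eta : Mor L -> S) : Prop :=
  (forall v : Obj L, eta (idm v) = e) /\
  (forall l m : Mor L, dom l = cod m -> eta (comp l m) = op (eta l) (eta m)).

Definition skew k (L : kgraph_data k) (S : countType) (op : S -> S -> S)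
  (eta : Mor L -> S) : kgraph_data k :=
  @KGData k ((Obj L * S)%type) ((Mor L * S)%type)
    (fun p => (cod p.1, p.2))
    (fun p => (dom p.1, op p.2 (eta p.1)))
    (fun p q => (comp p.1 q.1, p.2))
    (fun w => (idm w.1, w.2))
    (fun p => deg p.1).

From mathcomp Require Import all_boot.

(* A path (l, t) of the skew product is l decorated with the semigroup labels
   accumulated along it, so every factorisation l = l1 mu l2 lifts to one of
   (l, t) with the same degrees; hence the witnesses of aperiodicity at v lift
   to witnesses at (v, t), and distinct segments stay distinct because their
   first components differ. No k-graph axiom is needed for this. *)

Lemma skew_is_seg {k} {L : kgraph_data k} {S : countType} (op : S -> S -> S)
    (eta : Mor L -> S) {l mu : Mor L} (t : S) {a b : degk k} :
  is_seg l a b mu -> exists x : S, is_seg (L := skew op eta) (l, t) a b (mu, x).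
Proof.
move=> [l1 [l2 [dom_l1 [dom_mu [deg_l1 [deg_mu ->]]]]]].
exists (op t (eta l1)), (l1, t), (l2, op (op t (eta l1)) (eta mu)).
by rewrite /= dom_l1 dom_mu deg_l1 deg_mu.
Qed.

Lemma skew_aperiodic k (L : kgraph_data k) (S : countType) (op : S -> S -> S)
    (eta : Mor L -> S) :
  aperiodic L -> aperiodic (skew op eta).
Proof.
move=> apL [v t] m n neq_mn.
have [l [cod_l [le_deg [mu [nu [seg_mu [seg_nu neq_mu_nu]]]]]]] := apL v m n neq_mn.
exists (l, t); split; first by rewrite /= cod_l.
split; first exact: le_deg.
have [x seg_mux] := skew_is_seg op eta t seg_mu.
have [y seg_nuy] := skew_is_seg op eta t seg_nu.
exists (mu, x), (nu, y); split; first exact: seg_mux.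
split; first exact: seg_nuy.
by case.
Qed.

Theorem corollary3p5 (k : nat) (L : kgraph_data k) (S : countType)
  (op : S -> S -> S) (e : S) (eta : Mor L -> S) :
  is_kgraph L -> row_finite L -> no_sources L ->
  is_semigroup op e -> is_functor op e eta ->
  aperiodic L -> aperiodic (skew op eta).
Proof. by move=> _ _ _ _ _; apply: skew_aperiodic. Qed.
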